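(* Let $(V,\{\nu_n\})$ and $(W,\{\omega_n\})$ be $L^\infty$-MOS's and $\phi:V\to W$ a completely gauge-contractive linear map. Then the unital extension $\phi_1:V_1\to W_1$, $\phi_1(x,\lambda)=(\phi(x),\lambda)$, is completely positive. If moreover $\phi$ is completely gauge-isometric, then $\phi_1$ is a complete order embedding.
   Context: An $L^\infty$-MOS is a complex $*$-vector space $V$ ($M_n(V)$ with $(x_{ij})^*=(x_{ji}^* )$, self-adjoint part $M_n(V)_{sa}$) with proper gauges $\nu_n:M_n(V)_{sa}\to[0,\infty)$ (subadditive, positively homogeneous, $\nu_n(A)=\nu_n(-A)=0\Rightarrow A=0$) such that $\nu_k(X^*AX)\le\|X\|^2\nu_n(A)$ for scalar $X\in M_{n,k}$ and $\nu_{n+k}(A\oplus B)=\max\{\nu_n(A),\nu_k(B)\}$. A linear map $\phi$ between $L^\infty$-MOS's is completely gauge-contractive if $\phi(x^* )=\phi(x)^*$ and $\omega_n(\phi^{(n)}(A))\le\nu_n(A)$ for all $n$, $A\in M_n(V)_{sa}$; completely gauge-isometric if it is self-adjoint and $\omega_n(\phi^{(n)}(A))=\nu_n(A)$ for all $n$, $A$. Unitization: $V_1=V\oplus\mathbb{C}$, $M_n(V_1)=M_n(V)\oplus M_n$, $(A,X)^*=(A^*,X^* )$, $X_t=tI_n-X$, $Y\gg0$ means positive invertible, $u_n(A,X)=\inf\{t>0:X_t\gg0,\ \nu_n(X_t^{-1/2}AX_t^{-1/2})\le1\}$, with cones $M_n(V_1)_+=\{(A,X):u_n(-A,-X)=0\}$;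 similarly for $W_1$. Completely positive: each amplification maps positive cones into positive cones; complete order embedding: injective with $\phi_1^{(n)}(Z)\ge0$ iff $Z\ge0$ for all $n$. *)

From HB Require Import structures.
From mathcomp Require Import all_boot all_order all_algebra.
From Stdlib Require Import ClassicalEpsilon.
Set Implicit Arguments. Unset Strict Implicit. Unset Printing Implicit Defensive.
Import Order.TTheory GRing.Theory Num.Theory.
Local Open Scope ring_scope.

Section Defs.
Variable C : numClosedFieldType.

Definition adjmx m n (X : 'M[C]_(m, n)) : 'M[C]_(n, m) := (map_mx Num.conj X)^T.

Definition hnorm2 n (v : 'cV[C]_n) : C := \sum_i v i 0 * Num.conj (v i 0).

(* c = ||X||^2 (operator norm squared): the least c with ||Xv||^2 <= c ||v||^2 *)
Definition is_opnorm2 m n (X : 'M[C]_(m, n)) (c : C) : Prop :=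
  (forall v : 'cV[C]_n, hnorm2 (X *m v) <= c * hnorm2 v) /\
  (forall d : C, (forall v : 'cV[C]_n, hnorm2 (X *m v) <= d * hnorm2 v) -> c <= d).

Definition psd n (Y : 'M[C]_n) : Prop :=
  adjmx Y = Y /\ forall v : 'cV[C]_n, 0 <= (adjmx v *m Y *m v) 0 0.

Definition posinv n (Y : 'M[C]_n) : Prop := psd Y /\ Y \in unitmx.

Definition psqrt n (Y : 'M[C]_n) : 'M[C]_n :=
  epsilon (inhabits 0) (fun S : 'M[C]_n => psd S /\ S *m S = Y).

Definition Xt n (t : C) (X : 'M[C]_n) : 'M[C]_n := t%:M - X.
Definition Xt_isqrt n (t : C) (X : 'M[C]_n) : 'M[C]_n := psqrt (invmx (Xt t X)).

Variable V : lmodType C.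

Definition smulmx m n p (X : 'M[C]_(m, n)) (A : 'M[V]_(n, p)) : 'M[V]_(m, p) :=
  \matrix_(i, j) \sum_k (X i k *: A k j).
Definition mulmxs m n p (A : 'M[V]_(m, n)) (X : 'M[C]_(n, p)) : 'M[V]_(m, p) :=
  \matrix_(i, j) \sum_k (X k j *: A i k).

Definition congmx n k (X : 'M[C]_(n, k)) (A : 'M[V]_n) : 'M[V]_k :=
  smulmx (adjmx X) (mulmxs A X).

Definition scalemxV m n (t : C) (A : 'M[V]_(m, n)) : 'M[V]_(m, n) :=
  map_mx (fun v => t *: v) A.

Definition mxstar (star : V -> V) m n (A : 'M[V]_(m, n)) : 'M[V]_(n, m) :=
  (map_mx star A)^T.
Definition sa (star : V -> V) n (A : 'M[V]_n) : Prop := mxstar star A = A.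

Definition is_star (star : V -> V) : Prop :=
  (forall x, star (star x) = x) /\
  (forall x y, star (x + y) = star x + star y) /\
  (forall (a : C) x, star (a *: x) = Num.conj a *: star x).

Definition is_LinfMOS (star : V -> V) (nu : forall n, 'M[V]_n -> C) : Prop :=
  is_star star /\
  (forall n (A : 'M[V]_n), sa star A -> 0 <= nu n A) /\
  (forall n (A B : 'M[V]_n), sa star A -> sa star B -> nu n (A + B) <= nu n A + nu n B) /\
  (forall n (A : 'M[V]_n) (t : C), sa star A -> 0 < t -> nu n (scalemxV t A) = t * nu n A) /\
  (forall n (A : 'M[V]_n), sa star A -> nu n A = 0 -> nu n (- A) = 0 -> A = 0) /\
  (forall n k (X : 'M[C]_(n, k)) (A : 'M[V]_n) (c : C), sa star A ->
      is_opnorm2 X c -> nu k (congmx X A) <= c * nu n A) /\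
  (forall n k (A : 'M[V]_n) (B : 'M[V]_k), sa star A -> sa star B ->
      nu (n + k)%N (block_mx A 0 0 B) = Num.max (nu n A) (nu k B)).

(* u_n(A, X) = 0, i.e. inf{t > 0 : X_t >> 0, nu_n(X_t^{-1/2} A X_t^{-1/2}) <= 1} = 0 *)
Definition u_zero (nu : forall n, 'M[V]_n -> C) n (A : 'M[V]_n) (X : 'M[C]_n) : Prop :=
  forall eps : C, 0 < eps -> exists t : C,
    [/\ 0 < t, t < eps, posinv (Xt t X) &
        nu n (smulmx (Xt_isqrt t X) (mulmxs A (Xt_isqrt t X))) <= 1].

(* positive cone of the unitization: (A, X) in M_n(V_1)_sa with u_n(-A,-X) = 0 *)
Definition pos1 (star : V -> V) (nu : forall n, 'M[V]_n -> C) n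
    (A : 'M[V]_n) (X : 'M[C]_n) : Prop :=
  [/\ sa star A, adjmx X = X & u_zero nu (- A) (- X)].

End Defs.

Section Maps.
Variable C : numClosedFieldType.
Variables V W : lmodType C.

Definition gauge_contractive (starV : V -> V) (nuV : forall n, 'M[V]_n -> C)
    (starW : W -> W) (nuW : forall n, 'M[W]_n -> C) (phi : V -> W) : Prop :=
  (forall x, phi (starV x) = starW (phi x)) /\
  (forall n (A : 'M[V]_n), sa starV A -> nuW n (map_mx phi A) <= nuV n A).

Definition gauge_isometric (starV : V -> V) (nuV : forall n, 'M[V]_n -> C)
    (starW : W -> W) (nuW : forall n, 'M[W]_n -> C) (phi : V -> W) : Prop :=
  (forall x, phi (starV x) = starW (phi x)) /\
  (forall n (A : 'M[V]_n), sa starV A -> nuW n (map_mx phi A) = nuV n A).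

(* phi_1 (x, lambda) = (phi x, lambda); on M_n(V_1) = M_n(V) x M_n : (A, X) |-> (phi A, X) *)
Definition unital_ext (phi : V -> W) (p : V * C) : W * C := (phi p.1, p.2).

Definition completely_positive1 (starV : V -> V) (nuV : forall n, 'M[V]_n -> C)
    (starW : W -> W) (nuW : forall n, 'M[W]_n -> C) (phi : V -> W) : Prop :=
  forall n (A : 'M[V]_n) (X : 'M[C]_n),
    pos1 starV nuV A X -> pos1 starW nuW (map_mx phi A) X.

Definition complete_order_embedding1 (starV : V -> V) (nuV : forall n, 'M[V]_n -> C)
    (starW : W -> W) (nuW : forall n, 'M[W]_n -> C) (phi : V -> W) : Prop :=
  injective (unital_ext phi) /\
  forall n (A : 'M[V]_n) (X : 'M[C]_n),
    pos1 starW nuW (map_mx phi A) X <-> pos1 starV nuV A X.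
End Maps.

(* Positivity of (A, X) in the unitization asks that, for arbitrarily small
   t > 0, the congruence S (-A) S by S = X_t^{-1/2} has gauge at most 1.  The
   square root S is Hermitian (spectral theorem), so S (-A) S is self-adjoint,
   and a linear *-map phi commutes with the congruence.  Hence a gauge
   contraction maps these witnesses for (A, X) to witnesses for (phi A, X),
   and a gauge isometry also reflects them.  A gauge isometry is injective:
   a self-adjoint y with phi y = 0 has nu(y) = nu(-y) = 0, so y = 0 by
   properness of the gauge, and every element is a combination of two
   self-adjoint ones. *)

From mathcomp Require Import all_boot all_order all_algebra.
From Stdlib Require Import ClassicalEpsilon.
Import Order.TTheory GRing.Theory Num.Theory.
Local Open Scope ring_scope.
Local Open Scope sesquilinear_scope.

Section PositiveSquareRoot.
Context {C : numClosedFieldType}.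

Lemma adjmxE m n (X : 'M[C]_(m, n)) : adjmx X = X^t*.
Proof. by rewrite /adjmx map_trmx. Qed.

Lemma adjmxM m n p (X : 'M[C]_(m, n)) (Y : 'M[C]_(n, p)) :
  adjmx (X *m Y) = adjmx Y *m adjmx X.
Proof. by rewrite /adjmx map_mxM trmx_mul. Qed.

Lemma adjmxK m n (X : 'M[C]_(m, n)) : adjmx (adjmx X) = X.
Proof. by rewrite !adjmxE trmxCK. Qed.

Lemma adjmx_delta m n (i : 'I_m) (j : 'I_n) :
  adjmx (delta_mx i j : 'M[C]_(m, n)) = delta_mx j i.
Proof.
apply/matrixP => a b; rewrite !mxE.
by case: eqP; case: eqP; rewrite ?conjC0 ?conjC1.
Qed.

Lemma psd_congr m n (P : 'M[C]_(m, n)) (D : 'M[C]_m) :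
  psd D -> psd (adjmx P *m D *m P).
Proof.
move=> [hD qD]; split; first by rewrite !adjmxM adjmxK hD mulmxA.
by move=> v; rewrite -!mulmxA !mulmxA -adjmxM -mulmxA.
Qed.

Lemma psd_diag n (s : 'rV[C]_n) : (forall i, 0 <= s 0 i) -> psd (diag_mx s).
Proof.
move=> s_ge0; split.
  rewrite /adjmx map_diag_mx tr_diag_mx; congr diag_mx.
  by apply/rowP => i; rewrite mxE; apply: geC0_conj.
move=> v; rewrite mul_mx_diag !mxE; apply: sumr_ge0 => i _; rewrite !mxE.
by rewrite mulrAC mulr_ge0 // mulrC mul_conjC_ge0.
Qed.

Lemma spectralmx_adjmxV n (Y : 'M[C]_n) :
  spectralmx Y *m adjmx (spectralmx Y) = 1%:M.
Proof. by rewrite adjmxE; apply/unitarymxP/spectral_unitarymx. Qed.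

Lemma psd_spectral {n} {Y : 'M[C]_n} : psd Y ->
  Y = adjmx (spectralmx Y) *m diag_mx (spectral_diag Y) *m spectralmx Y.
Proof.
move=> [hY _]; rewrite adjmxE -invmx_unitary ?spectral_unitarymx //.
by apply/orthomx_spectralP/normalmxP; rewrite -adjmxE hY.
Qed.

Lemma psd_spectral_diag_ge0 n (Y : 'M[C]_n) (i : 'I_n) :
  psd Y -> 0 <= spectral_diag Y 0 i.
Proof.
move=> psdY; have eY := psd_spectral psdY.
set P := spectralmx Y in eY *; set d := spectral_diag Y in eY *.
have PPt : P *m adjmx P = 1%:M := spectralmx_adjmxV _ _.
have := proj2 psdY (adjmx P *m delta_mx i 0).
rewrite adjmxM adjmxK adjmx_delta eY !mulmxA -(mulmxA _ P) PPt mulmx1.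
by rewrite -(mulmxA _ P) PPt mulmx1 -rowE -colE !mxE eqxx mulr1n.
Qed.

Lemma psd_sqrt_exists n (Y : 'M[C]_n) : psd Y -> exists S, psd S /\ S *m S = Y.
Proof.
move=> psdY; have eY := psd_spectral psdY.
set P := spectralmx Y in eY *; set d := spectral_diag Y in eY *.
have PPt : P *m adjmx P = 1%:M := spectralmx_adjmxV _ _.
pose s := \row_i sqrtC (d 0 i).
exists (adjmx P *m diag_mx s *m P); split.
  apply: psd_congr; apply: psd_diag => i.
  by rewrite mxE sqrtC_ge0 psd_spectral_diag_ge0.
rewrite -!mulmxA (mulmxA P) PPt mul1mx (mulmxA (diag_mx s)) mulmx_diag.
rewrite !mulmxA [RHS]eY; congr (_ *m diag_mx _ *m _).
by apply/rowP => i; rewrite !mxE -expr2 sqrtCK.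
Qed.

Lemma psd_invmx n (Y : 'M[C]_n) : posinv Y -> psd (invmx Y).
Proof.
move=> [[hY qY] uY]; have hI : adjmx (invmx Y) = invmx Y.
  by rewrite /adjmx map_invmx trmx_inv -/(adjmx Y) hY.
split=> // v; have := qY (invmx Y *m v).
by rewrite adjmxM hI -!mulmxA (mulmxA Y) mulmxV // mul1mx !mulmxA.
Qed.

Lemma psqrt_psd n (Y : 'M[C]_n) : psd Y -> psd (psqrt Y).
Proof.
move=> /psd_sqrt_exists ex.
by case: (epsilon_spec (inhabits 0) (fun S : 'M[C]_n => psd S /\ S *m S = Y) ex).
Qed.

Lemma Xt_isqrt_herm {n t} {X : 'M[C]_n} :
  posinv (Xt t X) -> adjmx (Xt_isqrt t X) = Xt_isqrt t X.
Proof. by move=> /psd_invmx /psqrt_psd []. Qed.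

End PositiveSquareRoot.

Section StarSpace.
Context {C : numClosedFieldType} {V : lmodType C} {star : V -> V}.
Hypothesis starP : is_star star.

Lemma starK : involutive star.
Proof. by case: starP. Qed.

Lemma starD x y : star (x + y) = star x + star y.
Proof. by case: starP => _ []. Qed.

Lemma starZ (a : C) x : star (a *: x) = Num.conj a *: star x.
Proof. by case: starP => _ []. Qed.

Lemma star0 : star 0 = 0.
Proof. by apply: (addrI (star 0)); rewrite -starD !addr0. Qed.

Lemma starN x : star (- x) = - star x.
Proof. by apply: (addrI (star x)); rewrite -starD !subrr star0. Qed.

Lemma star_sum I (r : seq I) (P : pred I) (F : I -> V) :
  star (\sum_(i <- r | P i) F i) = \sum_(i <- r | P i) star (F i).
Proof. exact: (big_morph star starD star0). Qed.

Lemma sa_oppmx {n} {A : 'M[V]_n} : sa star A -> sa star (- A).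
Proof.
move=> /matrixP saA; apply/matrixP => i j.
by rewrite !mxE starN; have := saA i j; rewrite !mxE => ->.
Qed.

Lemma sa_congr {n} {S : 'M[C]_n} {A : 'M[V]_n} :
  adjmx S = S -> sa star A -> sa star (smulmx S (mulmxs A S)).
Proof.
move=> /matrixP hS /matrixP saA; apply/matrixP => i j.
have conjS a b : Num.conj (S a b) = S b a by have := hS b a; rewrite !mxE.
have starA a b : star (A a b) = A b a by have := saA b a; rewrite !mxE.
rewrite !mxE star_sum.
under eq_bigr => k _ do rewrite mxE starZ star_sum conjS scaler_sumr.
under [RHS]eq_bigr => k _ do rewrite mxE scaler_sumr.
rewrite exchange_big /=; apply: eq_bigr => l _; apply: eq_bigr => k _.
by rewrite starZ conjS starA !scalerA mulrC.
Qed.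

Lemma sa_Xt_congr {n t} {X : 'M[C]_n} {A : 'M[V]_n} :
  posinv (Xt t X) -> sa star A ->
  sa star (smulmx (Xt_isqrt t X) (mulmxs A (Xt_isqrt t X))).
Proof. by move=> /Xt_isqrt_herm; apply: sa_congr. Qed.

End StarSpace.

Section StarMap.
Context {C : numClosedFieldType} {V W : lmodType C}.
Context {starV : V -> V} {starW : W -> W} {phi : {linear V -> W}}.
Hypotheses (starVP : is_star starV) (starWP : is_star starW).
Hypothesis phi_star : forall x, phi (starV x) = starW (phi x).

Lemma map_mx_congr n (S : 'M[C]_n) (A : 'M[V]_n) :
  map_mx phi (smulmx S (mulmxs A S)) = smulmx S (mulmxs (map_mx phi A) S).
Proof.
apply/matrixP => i j; rewrite !mxE linear_sum; apply: eq_bigr => k _.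
rewrite !mxE linearZ linear_sum /=; congr (_ *: _); apply: eq_bigr => l _.
by rewrite !mxE linearZ.
Qed.

Lemma map_mxstar m n (A : 'M[V]_(m, n)) :
  map_mx phi (mxstar starV A) = mxstar starW (map_mx phi A).
Proof. by apply/matrixP => i j; rewrite !mxE phi_star. Qed.

Lemma sa_map_mx {n} {A : 'M[V]_n} : sa starV A -> sa starW (map_mx phi A).
Proof. by rewrite /sa -map_mxstar => ->. Qed.

Lemma sa_map_mx_inj {n} {A : 'M[V]_n} :
  injective phi -> sa starW (map_mx phi A) -> sa starV A.
Proof.
move=> inj_phi; rewrite /sa -map_mxstar => /matrixP eqA.
by apply/matrixP => i j; apply: inj_phi; have := eqA i j; rewrite !mxE.
Qed.

(* For x in the kernel, x + x^* and 'i (x - x^* ) are self-adjoint kernel elements. *)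
Lemma star_map_inj :
  (forall y, starV y = y -> phi y = 0 -> y = 0) -> injective phi.
Proof.
move=> sa_ker; apply: raddf_inj => x phix0.
have phi_starx : phi (starV x) = 0 by rewrite phi_star phix0 star0.
have re0 : x + starV x = 0.
  apply: sa_ker; first by rewrite starD // starK // addrC.
  by rewrite linearD /= phix0 phi_starx addr0.
have im0 : x - starV x = 0.
  suff /eqP : 'i *: (x - starV x) = 0 by rewrite scaler_eq0 (negbTE (neq0Ci _)) => /eqP.
  apply: sa_ker.
    by rewrite starZ // starD // starN // starK // conjCi scaleNr -scalerN opprB addrC.
  by rewrite linearZ linearB /= phix0 phi_starx subr0 scaler0.
suff /eqP : x *+ 2 = 0 by rewrite -scaler_nat scaler_eq0 pnatr_eq0 => /eqP.
by rewrite mulr2n -{1}(subrK (starV x) x) im0 add0r addrC re0.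
Qed.

End StarMap.

Lemma gauge0 {C : numClosedFieldType} {V : lmodType C} {star : V -> V}
    {nu : forall n, 'M[V]_n -> C} n :
  is_LinfMOS star nu -> nu n 0 = 0.
Proof.
move=> [starP [_ [_ [homog _]]]].
have sa0 : sa star (0 : 'M[V]_n) by apply/matrixP => i j; rewrite !mxE star0.
have scale0 : scalemxV 2 (0 : 'M[V]_n) = 0.
  by apply/matrixP => i j; rewrite !mxE scaler0.
have : nu n 0 + 0 = nu n 0 + nu n 0.
  by rewrite addr0 -mulr2n -mulr_natl -homog ?ltr0Sn // scale0.
by move/addrI.
Qed.

Lemma gauge_isometric_inj {C : numClosedFieldType} {V W : lmodType C}
    {starV : V -> V} {nuV : forall n, 'M[V]_n -> C}
    {starW : W -> W} {nuW : forall n, 'M[W]_n -> C} {phi : {linear V -> W}} :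
  is_LinfMOS starV nuV -> is_LinfMOS starW nuW ->
  gauge_isometric starV nuV starW nuW phi -> injective phi.
Proof.
move=> LV LW [phi_star phi_iso].
have [starVP [_ [_ [_ [proper _]]]]] := LV.
apply: (star_map_inj starVP (proj1 LW) phi_star) => y sa_y phiy0.
pose Y : 'M[V]_1 := const_mx y.
have saY : sa starV Y by apply/matrixP => i j; rewrite !mxE sa_y.
have nuY0 : nuV 1%N Y = 0.
  rewrite -phi_iso // -(gauge0 1 LW); congr (nuW _ _).
  by apply/matrixP => i j; rewrite !mxE phiy0.
have : Y = 0.
  apply: (proper _ _ saY nuY0).
  rewrite -phi_iso; last exact: sa_oppmx.
  rewrite -(gauge0 1 LW); congr (nuW _ _).
  by apply/matrixP => i j; rewrite !mxE linearN /= phiy0 oppr0.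
by move/matrixP/(_ 0 0); rewrite !mxE.
Qed.

Lemma u_zero_mono {C : numClosedFieldType} {V W : lmodType C}
    {nuV : forall n, 'M[V]_n -> C} {nuW : forall n, 'M[W]_n -> C}
    n (A : 'M[V]_n) (B : 'M[W]_n) (X : 'M[C]_n) :
  (forall t, posinv (Xt t X) ->
     nuW n (smulmx (Xt_isqrt t X) (mulmxs B (Xt_isqrt t X))) <=
     nuV n (smulmx (Xt_isqrt t X) (mulmxs A (Xt_isqrt t X)))) ->
  u_zero nuV A X -> u_zero nuW B X.
Proof.
move=> le_nu uA eps eps_gt0; have [t [t_gt0 t_lt posX le1]] := uA eps eps_gt0.
by exists t; split=> //; apply: le_trans (le_nu t posX) le1.
Qed.

Theorem theorem3p13 (C : numClosedFieldType) (V W : lmodType C)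
    (starV : V -> V) (nuV : forall n, 'M[V]_n -> C)
    (starW : W -> W) (nuW : forall n, 'M[W]_n -> C)
    (phi : {linear V -> W}) :
  is_LinfMOS starV nuV -> is_LinfMOS starW nuW ->
  gauge_contractive starV nuV starW nuW phi ->
  completely_positive1 starV nuV starW nuW phi /\
  (gauge_isometric starV nuV starW nuW phi ->
   complete_order_embedding1 starV nuV starW nuW phi).
Proof.
move=> LV LW [phi_star phi_le]; have starVP := proj1 LV.
have phi_cp : completely_positive1 starV nuV starW nuW phi.
  move=> n A X [saA hX uA]; split=> //; first exact: sa_map_mx.
  apply: u_zero_mono uA => t posX.
  rewrite -(map_mxN phi) -(map_mx_congr (phi := phi)) phi_le //.
  exact: (sa_Xt_congr starVP posX (sa_oppmx starVP saA)).
split=> // phi_iso; have phi_inj := gauge_isometric_inj LV LW phi_iso.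
split=> [[x a] [y b] [/phi_inj -> ->] // | n A X]; split; last exact: phi_cp.
move=> [saphiA hX uphiA]; have saA := sa_map_mx_inj phi_star phi_inj saphiA.
split=> //; apply: u_zero_mono uphiA => t posX.
rewrite -(map_mxN phi) -(map_mx_congr (phi := phi)) (proj2 phi_iso) //.
exact: (sa_Xt_congr starVP posX (sa_oppmx starVP saA)).
Qed.
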